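(* Let $\Pi_q$ be a projective plane (not necessarily Desarguesian) of order $q$, let $\mu\ge 2$ be an integer, and let $s_\mu(2,q)$ be the smallest size of a $(1,\mu)$-saturating set in $\Pi_q$. Put $\delta=1/\sqrt{(q+1)\ln(q+1)}$. Then \[ s_\mu(2,q)\le 2D\sqrt{(q+1)\ln(q+1)}+2 \] holds in each of the following cases: (a) $D=2.4$, if $\mu=2$ and $q\ge 97$; (b) $D=2.6$, if $\mu=3$ and $q\ge 181$; (c) $D=2.8$, if $\mu=4$ and $q\ge 125$; (d) $D=\mu+1$, if $\mu\le\sqrt{q}$ and $q\ge 4$; (e) $D=2\mu-1$, if $\mu\le \frac12\big((1-\delta)q-\delta+1\big)+1$ and $q\ge 3$.
   Context: A point set $S\subset\Pi_q$ is $(1,\mu)$-saturating if for every point $Q\in\Pi_q\setminus S$ the number of secants of $S$ through $Q$, counted with multiplicity, is at least $\mu$, where a line $\ell$ meeting $S$ in at least two points is a secant and has multiplicity $\binom{\#(\ell\cap S)}{2}$. Here $\ln$ is the natural logarithm. *)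

From mathcomp Require Import all_boot.
From Stdlib Require Import Reals.
Set Implicit Arguments. Unset Strict Implicit. Unset Printing Implicit Defensive.

Section Plane.
Variables (P L : finType) (inc : P -> L -> bool).

Definition pts (l : L) : {set P} := [set p | inc p l].

Definition is_projective_plane : Prop :=
  (forall p1 p2 : P, p1 != p2 -> #|[set l | inc p1 l && inc p2 l]| = 1%N) /\
  (forall l1 l2 : L, l1 != l2 -> #|[set p | inc p l1 && inc p l2]| = 1%N) /\
  (exists f : 'I_4 -> P, injective f /\
     forall (i j k : 'I_4), i != j -> j != k -> i != k ->
       ~ (exists l, [&& inc (f i) l, inc (f j) l & inc (f k) l])).

Definition has_order (q : nat) : Prop := forall l : L, #|pts l| = q.+1.

(* (1,mu)-saturating: every point off S lies on secants of S whose
   multiplicities 'C(#(l ∩ S), 2) sum to at least mu (lines meeting S in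
   fewer than 2 points contribute 'C(_,2) = 0). *)
Definition saturating (mu : nat) (S : {set P}) : bool :=
  [forall Q in ~: S, (mu <= \sum_(l : L | inc Q l) 'C(#|pts l :&: S|, 2))%N].

(* s_mu(2,q): smallest size of a (1,mu)-saturating set
   (the full point set is always saturating, so the default #|P| is harmless) *)
Definition s_mu (mu : nat) : nat :=
  \big[minn/#|P|]_(S : {set P} | saturating mu S) #|S|.
End Plane.

Definition bound_D (q : nat) (D : R) : R :=
  (2 * D * sqrt (INR (q + 1) * ln (INR (q + 1))) + 2)%R.

Definition delta_q (q : nat) : R :=
  (1 / sqrt (INR (q + 1) * ln (INR (q + 1))))%R.

From mathcomp Require Import all_boot zify.
Set Implicit Arguments. Unset Strict Implicit. Unset Printing Implicit Defensive.

(* Take two lines l1, l2 meeting in O, a k-subset A of l1 \ O and a k-subset B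
   of l2, with mu < k.  Points of l1 or l2 lie on the secant l1 or l2, of
   multiplicity 'C(k, 2) >= mu.  A point Q off both lines lies on the secant
   through a and pi_Q(a) for every a in A whose projection pi_Q(a) from Q onto
   l2 is in B, so it suffices that B meets each of the at most (q+1)^2 k-sets
   pi_Q(A) in mu points.  Counting, for each Q, the k-subsets of l2 that fail
   shows that a good B exists once (q+1)^(mu+1) (q+mu-k)^k < (q+1)^k; since
   ln(1 - t) <= -t, this holds for the first integer k above
   D sqrt((q+1) ln(q+1)) as soon as mu - 1 < (D^2 - mu - 1) ln(q+1).  If this
   k exceeds q, then A = l1 \ O and B = l2 already do. *)

Lemma card1_pick (T : finType) (p : pred T) (x0 : T) :
  #|[set x | p x]| = 1 ->
  p (odflt x0 [pick x | p x]) /\ forall y, p y -> y = odflt x0 [pick x | p x].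
Proof.
move=> p1; have /cards1P [x px] : #|[set x | p x]| == 1 by rewrite p1.
have pE y : p y = (y == x) by rewrite -in_set1 -px inE.
case: pickP => [z pz | p0] /=.
  by split=> // y; rewrite !pE in pz *; rewrite (eqP pz) => /eqP.
by move: (p0 x); rewrite pE eqxx.
Qed.

Lemma extend_subset_card (T : finType) (X Y : {set T}) n :
  X \subset Y -> #|X| <= n <= #|Y| ->
  exists J : {set T}, [/\ X \subset J, J \subset Y & #|J| = n].
Proof.
move=> sXY /andP [leXn lenY].
have : 0 < #|[set J : {set T} | J \subset Y :\: X & #|J| == n - #|X|]|.
  by rewrite cards_draws bin_gt0 cardsD (setIidPr sXY) leq_sub2r.
case/card_gt0P => J; rewrite inE => /andP [sJ /eqP cJ].
have dXJ : X :&: J = set0.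
  apply/setP => x; rewrite !inE; apply/negbTE/andP => -[xX xJ].
  by move/subsetP/(_ x xJ): sJ; rewrite inE xX.
exists (X :|: J); split; first exact: subsetUl.
  by rewrite subUset sXY (subset_trans sJ) ?subsetDl.
by rewrite cardsU dXJ cards0 subn0 cJ subnKC.
Qed.

Lemma union_bound (I T : finType) (X : {set T}) (Js : {set I}) (F : I -> {set T}) :
  (forall x, x \in X -> exists2 j, j \in Js & x \in F j) ->
  #|X| <= \sum_(j in Js) #|F j|.
Proof.
move=> coverX; rewrite -sum1_card.
apply: (@leq_trans (\sum_(x in X) \sum_(j in Js) (x \in F j : nat))).
  apply: leq_sum => x xX; have [j jJ xF] := coverX x xX.
  by rewrite (bigD1 j) //= xF.
rewrite exchange_big /=; apply: leq_sum => j _.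
rewrite -sum1_card big_mkcond [X in _ <= X]big_mkcond /=.
by apply: leq_sum => x _; case: (x \in X); case: (x \in F j).
Qed.

Lemma card_draws_small_meet (T : finType) (U C : {set T}) k m :
  C \subset U -> #|C| = k -> m <= k ->
  #|[set B : {set T} | [&& B \subset U, #|B| == k & #|B :&: C| <= m]]|
    <= 'C(k, m) * 'C(#|U| - k + m, k).
Proof.
move=> sCU cC mk.
pose drawsC J := [set B : {set T} | B \subset (U :\: C) :|: J & #|B| == k].
apply: leq_trans (@union_bound _ _ _ [set J : {set T} | J \subset C & #|J| == m]
   drawsC _) _.
  move=> B; rewrite inE => /and3P [sBU cB cBC].
  have [|J [sBJ sJC cJ]] := @extend_subset_card _ (B :&: C) C m (subsetIr _ _).
    by rewrite cBC cC mk.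
  exists J; first by rewrite inE sJC cJ eqxx.
  rewrite inE cB andbT; apply/subsetP => x xB; rewrite !inE.
  case xC: (x \in C) => /=; last by rewrite (subsetP sBU).
  by apply: (subsetP sBJ); rewrite inE xB xC.
rewrite (eq_bigr (fun _ => 'C(#|U| - k + m, k))); last first.
  move=> J; rewrite inE => /andP [sJC /eqP cJ].
  rewrite cards_draws cardsU cardsD (setIidPr sCU) cC cJ.
  suff -> : (U :\: C) :&: J = set0 by rewrite cards0 subn0.
  apply/setP => x; rewrite !inE; case xJ: (x \in J); last by rewrite andbF.
  by rewrite (subsetP sJC x xJ).
by rewrite sum_nat_const cards_draws cC.
Qed.

Lemma exists_draw_large_meets (I T : finType) (U : {set T}) (Qs : {set I})
    (C : I -> {set T}) k m :
  (forall Q, Q \in Qs -> C Q \subset U /\ #|C Q| = k) -> m <= k ->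
  #|Qs| * ('C(k, m) * 'C(#|U| - k + m, k)) < 'C(#|U|, k) ->
  exists B : {set T}, [/\ B \subset U, #|B| = k & forall Q, Q \in Qs -> m < #|B :&: C Q|].
Proof.
move=> hC mk few_bad.
set draws := [set B : {set T} | B \subset U & #|B| == k].
have [/existsP [B /andP [Bd /forallP goodB]]|] :=
  boolP [exists B, (B \in draws) && [forall Q, (Q \in Qs) ==> (m < #|B :&: C Q|)]].
  move: Bd; rewrite inE => /andP [sBU /eqP cB].
  by exists B; split => // Q /(implyP (goodB Q)).
rewrite negb_exists => /forallP all_bad; exfalso; move: few_bad.
apply/negP; rewrite -leqNgt -cards_draws.
apply: leq_trans (@union_bound _ _ draws Qs (fun Q =>
  [set B : {set T} | [&& B \subset U, #|B| == k & #|B :&: C Q| <= m]]) _) _.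
  move=> B Bd; move: (all_bad B); rewrite Bd /= negb_forall.
  case/existsP => Q; rewrite negb_imply -leqNgt => /andP [QQ small].
  by exists Q => //; move: Bd; rewrite !inE => /andP [-> ->].
rewrite -sum_nat_const; apply: leq_sum => Q /hC [sCU cC].
exact: card_draws_small_meet.
Qed.

Lemma ffact_leq_expn n m : n ^_ m <= n ^ m.
Proof.
elim: m => [|m IH]; first by rewrite ffactn0 expn0.
by rewrite ffactnSr expnSr leq_mul // leq_subr.
Qed.

Lemma bin_leq_expn n m : 'C(n, m) <= n ^ m.
Proof.
by apply: leq_trans (ffact_leq_expn n m); rewrite -bin_ffact leq_pmulr ?fact_gt0.
Qed.

Lemma leq_ffact_ratio n N k : n <= N -> n ^_ k * N ^ k <= N ^_ k * n ^ k.
Proof.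
move=> nN; elim: k => [|k IH]; first by rewrite !ffactn0 !expn0.
rewrite !ffactnSr !expnSr.
have step : (n - k) * N <= (N - k) * n.
  have [kn|nk] := leqP k n; last by rewrite (_ : n - k = 0) //; lia.
  by rewrite !mulnBl mulnC leq_sub2l // leq_mul2l nN orbT.
have -> : n ^_ k * (n - k) * (N ^ k * N) = (n ^_ k * N ^ k) * ((n - k) * N) by lia.
have -> : N ^_ k * (N - k) * (n ^ k * n) = (N ^_ k * n ^ k) * ((N - k) * n) by lia.
exact: leq_mul.
Qed.

Lemma leq_bin_ratio n N k : n <= N -> 'C(n, k) * N ^ k <= 'C(N, k) * n ^ k.
Proof.
move=> nN; rewrite -(leq_pmul2r (fact_gt0 k)).
by rewrite mulnAC bin_ffact [X in _ <= X]mulnAC bin_ffact leq_ffact_ratio.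
Qed.

(* 'C(k, m) <= N^m and 'C(N-k+m, k) <= 'C(N, k) ((N-k+m)/N)^k. *)
Lemma union_bound_lt_bin N k m c : 0 < N -> m <= k -> k <= N -> c <= N * N ->
  N ^ m.+2 * (N - k + m) ^ k < N ^ k ->
  c * ('C(k, m) * 'C(N - k + m, k)) < 'C(N, k).
Proof.
move=> N0 mk kN cN small.
have NkN : N - k + m <= N by lia.
have Nk : 0 < N ^ k by rewrite expn_gt0 N0.
rewrite -(ltn_pmul2r Nk).
apply: (@leq_ltn_trans ('C(N, k) * (N ^ m.+2 * (N - k + m) ^ k))); last first.
  by rewrite ltn_pmul2l // bin_gt0.
have -> : 'C(N, k) * (N ^ m.+2 * (N - k + m) ^ k) =
   (N * N) * (N ^ m * ('C(N, k) * (N - k + m) ^ k)) by rewrite !expnS; lia.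
rewrite -mulnA -mulnA; apply: leq_mul => //; apply: leq_mul; last exact: leq_bin_ratio.
apply: leq_trans (bin_leq_expn k m) _.
by case: m {mk small NkN} => [|m]; rewrite ?expn0 // leq_exp2r.
Qed.

Lemma s_mu_le_card (P L : finType) (inc : P -> L -> bool) mu (S : {set P}) :
  saturating inc mu S -> s_mu inc mu <= #|S|.
Proof.
move=> satS; rewrite /s_mu.
have : S \in index_enum {set P} by rewrite mem_index_enum.
elim: (index_enum _) => [//|S0 r IH]; rewrite inE big_cons.
case/orP => [/eqP <-|Sr]; first by rewrite satS geq_minl.
case: (saturating inc mu S0); last exact: IH.
exact: leq_trans (geq_minr _ _) (IH Sr).
Qed.

Section ProjectivePlane.
Variables (P L : finType) (inc : P -> L -> bool).
Hypothesis two_points_line :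
  forall p1 p2 : P, p1 != p2 -> #|[set l | inc p1 l && inc p2 l]| = 1.
Hypothesis two_lines_point :
  forall l1 l2 : L, l1 != l2 -> #|[set p | inc p l1 && inc p l2]| = 1.
Variables (l0 : L) (p0 : P).

Definition join p1 p2 := odflt l0 [pick l | inc p1 l && inc p2 l].
Definition meet l1 l2 := odflt p0 [pick p | inc p l1 && inc p l2].

Definition proj c l x := meet (join c x) l.

Lemma off_line_neq c x l : ~~ inc c l -> inc x l -> c != x.
Proof. by move=> cl xl; apply: contraNneq cl => ->. Qed.

Lemma join_inc p1 p2 : p1 != p2 -> inc p1 (join p1 p2) && inc p2 (join p1 p2).
Proof. by move=> p12; case: (card1_pick l0 (two_points_line p12)). Qed.

Lemma join_uniq p1 p2 l : p1 != p2 -> inc p1 l -> inc p2 l -> l = join p1 p2.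
Proof.
move=> p12 p1l p2l; case: (card1_pick l0 (two_points_line p12)) => _; apply.
by rewrite p1l.
Qed.

Lemma meet_inc l1 l2 : l1 != l2 -> inc (meet l1 l2) l1 && inc (meet l1 l2) l2.
Proof. by move=> l12; case: (card1_pick p0 (two_lines_point l12)). Qed.

Lemma meet_uniq l1 l2 p : l1 != l2 -> inc p l1 -> inc p l2 -> p = meet l1 l2.
Proof.
move=> l12 pl1 pl2; case: (card1_pick p0 (two_lines_point l12)) => _; apply.
by rewrite pl1.
Qed.

Lemma common_point_uniq l1 l2 x y : l1 != l2 ->
  inc x l1 -> inc x l2 -> inc y l1 -> inc y l2 -> x = y.
Proof. by move=> l12 *; rewrite (@meet_uniq _ _ x l12) // (@meet_uniq _ _ y l12). Qed.

Lemma common_line_uniq p1 p2 l l' : p1 != p2 ->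
  inc p1 l -> inc p2 l -> inc p1 l' -> inc p2 l' -> l = l'.
Proof. by move=> p12 *; rewrite (@join_uniq _ _ l p12) // (@join_uniq _ _ l' p12). Qed.

Lemma join_neq c l x : c != x -> ~~ inc c l -> join c x != l.
Proof. by move=> cx cl; apply: contraNneq cl => <-; case/andP: (join_inc cx). Qed.

Lemma proj_inc c l x : c != x -> ~~ inc c l ->
  inc (proj c l x) l && inc (proj c l x) (join c x).
Proof. by move=> cx cl; rewrite andbC meet_inc // join_neq. Qed.

Lemma join_proj c l x : c != x -> ~~ inc c l -> join c (proj c l x) = join c x.
Proof.
move=> cx cl; have /andP [pl pj] := proj_inc cx cl.
have c_proj : c != proj c l x by apply: contraNneq cl => ->.
by rewrite -(join_uniq c_proj _ pj) //; case/andP: (join_inc cx).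
Qed.

Lemma join_inj_on c l : ~~ inc c l -> {in pts inc l &, injective (join c)}.
Proof.
move=> cl x y; rewrite !inE => xl yl jxy.
have [cx cy] := (off_line_neq cl xl, off_line_neq cl yl).
apply: (common_point_uniq (join_neq cx cl)) => //; first by case/andP: (join_inc cx).
by rewrite jxy; case/andP: (join_inc cy).
Qed.

Lemma proj_inj_on c l l' : ~~ inc c l -> ~~ inc c l' ->
  {in pts inc l &, injective (proj c l')}.
Proof.
move=> cl cl' x y xl yl pxy; apply: (join_inj_on cl) => //.
move: xl yl; rewrite !inE => xl yl.
by rewrite -(join_proj (off_line_neq cl xl) cl') -(join_proj (off_line_neq cl yl) cl') pxy.
Qed.

Lemma bin2_meet_leq_sum Q S l : inc Q l ->
  'C(#|pts inc l :&: S|, 2) <= \sum_(l' : L | inc Q l') 'C(#|pts inc l' :&: S|, 2).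
Proof. by move=> Ql; rewrite (bigD1 l) //= leq_addr. Qed.

Lemma card_secants_leq_sum Q S (X : {set L}) :
  (forall l, l \in X -> inc Q l /\ 1 < #|pts inc l :&: S|) ->
  #|X| <= \sum_(l : L | inc Q l) 'C(#|pts inc l :&: S|, 2).
Proof.
move=> secX; rewrite -sum1_card big_mkcond [X in _ <= X]big_mkcond /=.
apply: leq_sum => l _; case: ifP => // lX.
by have [-> c2] := secX l lX; rewrite bin_gt0.
Qed.

Section TwoLines.
Variables (l1 l2 : L).
Hypothesis l1_neq_l2 : l1 != l2.
Local Notation O := (meet l1 l2).

Lemma meet_on_lines : inc O l1 && inc O l2.
Proof. exact: meet_inc. Qed.

Lemma card_proj_imset Q (A : {set P}) : ~~ inc Q l1 -> ~~ inc Q l2 ->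
  A \subset pts inc l1 -> (proj Q l2 @: A \subset pts inc l2) /\ #|proj Q l2 @: A| = #|A|.
Proof.
move=> Ql1 Ql2 sA; split; last first.
  by rewrite card_in_imset // => x y /(subsetP sA) xl /(subsetP sA); apply: proj_inj_on.
apply/subsetP => _ /imsetP [a /(subsetP sA) al ->]; rewrite inE in al.
by rewrite inE; case/andP: (proj_inc (off_line_neq Ql1 al) Ql2).
Qed.

Lemma saturating_two_lines mu (A B : {set P}) :
  A \subset pts inc l1 :\ O -> B \subset pts inc l2 ->
  mu <= 'C(#|A|, 2) -> mu <= 'C(#|B|, 2) ->
  (forall Q, ~~ inc Q l1 -> ~~ inc Q l2 -> mu <= #|B :&: proj Q l2 @: A|) ->
  saturating inc mu (A :|: B).
Proof.
move=> sA sB cA cB hQ; apply/forallP => Q; apply/implyP => _.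
have sAl1 : A \subset pts inc l1 by apply: subset_trans sA (subsetDl _ _).
have [Ql1|Ql1] := boolP (inc Q l1).
  apply: leq_trans cA (leq_trans _ (bin2_meet_leq_sum _ Ql1)).
  by rewrite leq_bin2l // subset_leq_card // subsetI sAl1 subsetUl.
have [Ql2|Ql2] := boolP (inc Q l2).
  apply: leq_trans cB (leq_trans _ (bin2_meet_leq_sum _ Ql2)).
  by rewrite leq_bin2l // subset_leq_card // subsetI sB subsetUr.
apply: leq_trans (hQ Q Ql1 Ql2) _.
set Y := B :&: proj Q l2 @: A.
have sYl2 : {subset Y <= pts inc l2} by move=> b /setIP [/(subsetP sB)].
rewrite -(card_in_imset (sub_in2 sYl2 (join_inj_on Ql2))).
apply: card_secants_leq_sum => _ /imsetP [b /setIP [bB /imsetP [a aA eb]] ->].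
subst b.
have /setD1P [aO al1] := subsetP sA a aA; rewrite inE in al1.
have Qa := off_line_neq Ql1 al1.
have /andP [pl2 pj] := proj_inc Qa Ql2.
rewrite join_proj //; split; first by case/andP: (join_inc Qa).
have ap : a != proj Q l2 a.
  by apply: contraNneq aO => ap; rewrite (meet_uniq l1_neq_l2 al1) // ap.
apply: (@leq_trans #|[set a; proj Q l2 a]|); first by rewrite cards2 ap.
apply/subset_leq_card/subsetP => x; rewrite !inE => /orP [] /eqP ->.
  by rewrite aA; case/andP: (join_inc Qa) => _ ->.
by rewrite pj bB orbT.
Qed.

Variable q : nat.
Hypothesis plane_order : has_order inc q.

Lemma card_line_D1 l x : inc x l -> #|pts inc l :\ x| = q.
Proof. by move=> xl; have := cardsD1 x (pts inc l); rewrite plane_order inE xl => -[]. Qed.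

Lemma s_mu_le_full mu : mu <= q -> 3 <= q -> s_mu inc mu <= q.*2.+1.
Proof.
move=> muq q3; have /andP [Ol1 _] := meet_on_lines.
have le_bin2 n : 3 <= n -> n <= 'C(n, 2).
  by case: n => [|[|[|n]]] // _; rewrite binS bin1; have := bin_gt0 n.+2 2; lia.
have -> : q.*2.+1 = #|pts inc l1 :\ O| + #|pts inc l2|.
  by rewrite card_line_D1 // plane_order; lia.
apply: leq_trans (s_mu_le_card (saturating_two_lines _ _ _ _ _)) (leq_card_setU _ _).
- exact: subxx.
- exact: subxx.
- by rewrite card_line_D1 //; apply: leq_trans muq (le_bin2 _ q3).
- by rewrite plane_order; apply: leq_trans (le_bin2 _ _); lia.
move=> Q Ql1 Ql2.
have [sl2 cA] := card_proj_imset (A := pts inc l1 :\ O) Ql1 Ql2 (subsetDl _ _).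
by rewrite (setIidPr sl2) cA card_line_D1.
Qed.

Lemma card_off_two_lines : 2 <= q ->
  #|[set Q | ~~ inc Q l1 && ~~ inc Q l2]| <= q.+1 * q.+1.
Proof.
move=> q2; have /andP [_ Ol2] := meet_on_lines.
have : 1 < #|pts inc l2 :\ O| by rewrite card_line_D1.
case/card_gt1P => Z [W [/setD1P [ZO Zl2] /setD1P [WO Wl2] ZW]].
move: Zl2 Wl2; rewrite !inE => Zl2 Wl2.
have off_l1 X : X != O -> inc X l2 -> ~~ inc X l1.
  by move=> XO Xl2; apply: contra XO => Xl1; rewrite -(meet_uniq l1_neq_l2 Xl1 Xl2).
have [Zl1 Wl1] := (off_l1 Z ZO Zl2, off_l1 W WO Wl2).
set Qs := [set Q | _].
have neq Y Q : inc Y l2 -> Q \in Qs -> Y != Q.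
  by rewrite inE => Yl2 /andP [_]; apply: contraNneq => <-.
pose g Q := (proj Z l1 Q, proj W l1 Q).
have g_inj : {in Qs &, injective g}.
  move=> Q Q' QQ QQ' [eZ eW].
  have jZ : join Z Q = join Z Q'.
    by rewrite -(join_proj (neq _ _ Zl2 QQ) Zl1) eZ join_proj // neq.
  have jW : join W Q = join W Q'.
    by rewrite -(join_proj (neq _ _ Wl2 QQ) Wl1) eW join_proj // neq.
  have /andP [ZjZ QjZ] := join_inc (neq _ _ Zl2 QQ).
  have /andP [WjW QjW] := join_inc (neq _ _ Wl2 QQ).
  have jZW : join Z Q != join W Q.
    apply/eqP => e.
    have l2E : l2 = join Z Q by apply: (common_line_uniq ZW) => //; rewrite e.
    by move: QQ; rewrite inE l2E QjZ andbF.
  apply: (common_point_uniq jZW) => //.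
    by rewrite jZ; case/andP: (join_inc (neq _ _ Zl2 QQ')).
  by rewrite jW; case/andP: (join_inc (neq _ _ Wl2 QQ')).
rewrite -(card_in_imset g_inj) -(plane_order l1) -cardsX.
apply/subset_leq_card/subsetP => _ /imsetP [Q QQ ->].
rewrite !inE; case/andP: (proj_inc (neq _ _ Zl2 QQ) Zl1) => -> _.
by case/andP: (proj_inc (neq _ _ Wl2 QQ) Wl1).
Qed.

Lemma s_mu_le_double mu k : 0 < mu -> mu < k -> k <= q ->
  (q.+1 * q.+1) * ('C(k, mu.-1) * 'C(q.+1 - k + mu.-1, k)) < 'C(q.+1, k) ->
  s_mu inc mu <= k.*2.
Proof.
move=> mu0 muk kq few_bad; have /andP [Ol1 _] := meet_on_lines.
have [|A [_ sA cA]] := @extend_subset_card _ set0 (pts inc l1 :\ O) k (sub0set _).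
  by rewrite cards0 card_line_D1.
have sAl1 : A \subset pts inc l1 by apply: subset_trans sA (subsetDl _ _).
set Qs := [set Q | ~~ inc Q l1 && ~~ inc Q l2].
have hC Q : Q \in Qs -> proj Q l2 @: A \subset pts inc l2 /\ #|proj Q l2 @: A| = k.
  by rewrite inE -cA => /andP [Ql1 Ql2]; apply: card_proj_imset.
have [|B [sB cB goodB]] := exists_draw_large_meets hC (leq_trans (leq_pred mu) (ltnW muk)).
  rewrite plane_order; apply: leq_ltn_trans few_bad.
  by rewrite leq_mul2r card_off_two_lines ?orbT //; lia.
have mu_bin2 : mu <= 'C(k, 2).
  by apply: leq_trans (leq_bin2l 2 muk); rewrite binS bin1 leq_addl.
have -> : k.*2 = #|A| + #|B| by rewrite cA cB addnn.
apply: leq_trans (s_mu_le_card (saturating_two_lines _ _ _ _ _)) (leq_card_setU _ _);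
  rewrite ?cA ?cB //.
move=> Q Ql1 Ql2; rewrite -(prednK mu0); apply: goodB.
by rewrite inE Ql1 Ql2.
Qed.

End TwoLines.
End ProjectivePlane.

Lemma exists_two_lines (P L : finType) (inc : P -> L -> bool) :
  is_projective_plane inc -> exists (p : P) (l1 l2 : L), l1 != l2.
Proof.
case=> two_points_line [_ [f [f_inj noncollinear]]].
have line_through i j : i != j -> exists l, inc (f i) l && inc (f j) l.
  move=> ij; have : 0 < #|[set l | inc (f i) l && inc (f j) l]|.
    by rewrite two_points_line // (inj_eq f_inj).
  by case/card_gt0P => l; rewrite inE; exists l.
have [l l01] := line_through ord0 (@Ordinal 4 1 isT) isT.
have [l' l23] := line_through (@Ordinal 4 2 isT) (@Ordinal 4 3 isT) isT.
exists (f ord0), l, l'; apply/eqP => ll'.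
apply: (noncollinear ord0 (@Ordinal 4 1 isT) (@Ordinal 4 2 isT)) => //.
by exists l; case/andP: l01 => -> ->; rewrite ll'; case/andP: l23.
Qed.

From Stdlib Require Import Reals Lra.

Lemma INR_expn a b : INR (expn a b) = (INR a ^ b)%R.
Proof. by elim: b => [|b IH]; rewrite ?expn0 // expnS mult_INR IH. Qed.

Lemma ln_le_sub1 y : (0 < y)%R -> (ln y <= y - 1)%R.
Proof. by move=> y0; have := exp_ineq1_le (ln y); rewrite exp_ln //; lra. Qed.

Lemma ln_ge_nat (x : R) (m : nat) : (3 ^ m <= x)%R -> (INR m <= ln x)%R.
Proof.
move=> h; have e3 := exp_le_3.
have em : (exp (INR m) <= 3 ^ m)%R.
  elim: m {h} => [|m IH]; first by rewrite exp_0 /=; lra.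
  rewrite S_INR exp_plus /= Rmult_comm.
  by apply: Rmult_le_compat => //; left; apply: exp_pos.
rewrite -(ln_exp (INR m)).
have [lt|<-] := Rle_lt_or_eq_dec _ _ (Rle_trans _ _ _ em h); last lra.
by left; apply: ln_increasing => //; apply: exp_pos.
Qed.

(* ln ((n - k + m) / n)^k <= -k (k - m) / n by ln y <= y - 1. *)
Lemma pow_lt_of_ln (n : R) (k m : nat) : (INR m <= INR k < n)%R ->
  (INR m.+2 * ln n < INR k * (INR k - INR m) / n)%R ->
  (n ^ m.+2 * (n - INR k + INR m) ^ k < n ^ k)%R.
Proof.
set a := INR k; set b := INR m => -[ba an] h.
have b0 : (0 <= b)%R by apply: pos_INR.
have n0 : (0 < n)%R by lra.
have y0 : (0 < n - a + b)%R by lra.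
apply: ln_lt_inv; [apply: Rmult_lt_0_compat; exact: pow_lt | exact: pow_lt |].
rewrite ln_mult; [rewrite !ln_pow // | exact: pow_lt | exact: pow_lt].
have ln_y : (ln (n - a + b) <= ln n - (a - b) / n)%R.
  have -> : (n - a + b = n * ((n - a + b) / n))%R by field; lra.
  rewrite ln_mult //; last by apply: Rdiv_lt_0_compat.
  have := ln_le_sub1 (Rdiv_lt_0_compat _ _ y0 n0).
  have -> : ((n - a + b) / n - 1 = - ((a - b) / n))%R by field; lra.
  lra.
have := Rmult_le_compat_l _ _ _ (pos_INR k) ln_y.
have -> : (a * (ln n - (a - b) / n) = a * ln n - a * (a - b) / n)%R by field; lra.
rewrite -/a; lra.
Qed.

Lemma union_bound_lt_bin_of_ln N k m c : (m <= k)%N -> (k < N)%N -> (c <= N * N)%N ->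
  (INR m.+2 * ln (INR N) < INR k * (INR k - INR m) / INR N)%R ->
  (c * ('C(k, m) * 'C(N - k + m, k)) < 'C(N, k))%N.
Proof.
move=> mk kN cN h; apply: union_bound_lt_bin => //; first exact: leq_ltn_trans kN.
  exact: ltnW.
apply/ltP/INR_lt; rewrite mult_INR !INR_expn plus_INR minus_INR; last exact/leP/ltnW.
by apply: pow_lt_of_ln => //; split; [apply/le_INR/leP | apply/lt_INR/ltP].
Qed.

(* a^2 >= D^2 n L and a b <= n b. *)
Lemma threshold_ineq (n a b D L : R) : (0 < n)%R -> (0 <= b)%R -> (a <= n)%R ->
  (0 <= D)%R -> (0 <= n * L)%R -> (D * sqrt (n * L) <= a)%R ->
  (b < (D ^ 2 - b - 2) * L)%R -> ((b + 2) * L < a * (a - b) / n)%R.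
Proof.
move=> n0 b0 an D0 nL0 ha hb.
have x0 : (0 <= D * sqrt (n * L))%R by apply: Rmult_le_pos => //; apply: sqrt_pos.
have a2 : (D ^ 2 * (n * L) <= a * a)%R.
  have := Rmult_le_compat _ _ _ _ x0 x0 ha ha.
  have -> : (D * sqrt (n * L) * (D * sqrt (n * L)) =
    D ^ 2 * (sqrt (n * L) * sqrt (n * L)))%R by ring.
  by rewrite sqrt_sqrt.
have ab : (a * b <= n * b)%R by apply: Rmult_le_compat_r.
apply: (Rmult_lt_reg_r n) => //.
have -> : (a * (a - b) / n * n = a * a - a * b)%R by field; lra.
nra.
Qed.

Lemma nat_between (x : R) : (0 <= x)%R -> exists k : nat, (x < INR k <= x + 1)%R.
Proof.
move=> x0; have [up_gt up_le] := archimed x.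
have up0 : (0 <= up x)%Z by apply: le_IZR; lra.
exists (Z.to_nat (up x)); rewrite INR_IZR_INZ Znat.Z2Nat.id //; lra.
Qed.

Lemma ln_sqrt_lower q : (3 <= q)%N ->
  (1 <= ln (INR (q + 1)))%R /\ (2 <= sqrt (INR (q + 1) * ln (INR (q + 1))))%R.
Proof.
move=> q3; have n4 : (4 <= INR (q + 1))%R.
  by rewrite plus_INR; have := le_INR 3 q (elimT leP q3); rewrite /=; lra.
have ln1 : (1 <= ln (INR (q + 1)))%R.
  by have := @ln_ge_nat (INR (q + 1)) 1; rewrite /=; lra.
split => //; rewrite -(sqrt_square 2); last lra.
apply: sqrt_le_1_alt; nra.
Qed.

Lemma s_mu_le_bound_D (P L : finType) (inc : P -> L -> bool) (q mu : nat) (D : R) :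
  is_projective_plane inc -> has_order inc q -> (2 <= mu)%N -> (mu <= q)%N ->
  (3 <= q)%N -> (0 <= D)%R ->
  (INR mu + 1 <= D * sqrt (INR (q + 1) * ln (INR (q + 1))))%R ->
  (INR mu - 1 < (D ^ 2 - INR mu - 1) * ln (INR (q + 1)))%R ->
  (INR (s_mu inc mu) <= bound_D q D)%R.
Proof.
move=> plane ord mu2 muq q3 D0 above margin.
have [p [l1 [l2 l12]]] := exists_two_lines plane.
case: plane => two_points_line [two_lines_point _].
have [ln1 _] := ln_sqrt_lower q3.
rewrite /bound_D; rewrite addn1 in above margin ln1 *.
set n := INR q.+1 in above margin ln1 *; set x := (D * sqrt (n * ln n))%R in above *.
have -> : (2 * D * sqrt (n * ln n) + 2 = 2 * x + 2)%R by rewrite /x; ring.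
have nq : n = (INR q + 1)%R by rewrite /n S_INR.
have q0 := pos_INR q.
have mu2R : (2 <= INR mu)%R by have := le_INR 2 mu (elimT leP mu2); rewrite /=; lra.
have [qx|xq] := Rle_lt_dec (INR q) x.
  have := s_mu_le_full two_points_line two_lines_point l1 p l12 ord muq q3.
  by move/leP/le_INR; rewrite -addnn S_INR plus_INR; lra.
have x0 : (0 <= x)%R by lra.
have [k [xk kx]] := nat_between x0.
have muk : (mu < k)%N by apply/ltP/INR_lt; lra.
have kq : (k < q.+1)%N by apply/ltP/INR_lt; rewrite S_INR; lra.
have mu_pred : INR mu.-1 = (INR mu - 1)%R.
  by case: (mu) mu2 => // m _; rewrite S_INR /=; ring.
have counting :
    (q.+1 * q.+1 * ('C(k, mu.-1) * 'C(q.+1 - k + mu.-1, k)) < 'C(q.+1, k))%N.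
  apply: union_bound_lt_bin_of_ln => //; first exact: leq_trans (leq_pred mu) (ltnW muk).
  rewrite -/n mu_pred !S_INR mu_pred.
  have -> : (INR mu - 1 + 1 + 1 = INR mu - 1 + 2)%R by ring.
  apply: (threshold_ineq (D := D)); try lra.
  - by apply: Rmult_le_pos; lra.
  - by rewrite -/x; lra.
have := s_mu_le_double two_points_line two_lines_point l1 p l12 ord (ltnW mu2) muk kq counting.
by move/leP/le_INR; rewrite -addnn plus_INR; lra.
Qed.

Lemma s_mu_le_bound_D_of_pow3 (P L : finType) (inc : P -> L -> bool)
    (q mu m : nat) (D : R) :
  is_projective_plane inc -> has_order inc q -> (2 <= mu)%N -> (mu <= q)%N ->
  (3 <= q)%N -> (3 ^ m <= q + 1)%N ->
  (INR mu + 1 <= 2 * D)%R -> (INR mu - 1 < (D ^ 2 - INR mu - 1) * INR m)%R ->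
  (INR (s_mu inc mu) <= bound_D q D)%R.
Proof.
move=> plane ord mu2 muq q3 m3 hD margin.
have mu2R : (2 <= INR mu)%R by have := le_INR 2 mu (elimT leP mu2); rewrite /=; lra.
have [ln1 sqrt2] := ln_sqrt_lower q3.
have lnm : (INR m <= ln (INR (q + 1)))%R.
  have INR3 : INR 3 = 3%R by rewrite /=; ring.
  by apply: ln_ge_nat; rewrite -INR3 -pow_INR; apply/le_INR/leP.
have m0 := pos_INR m.
apply: s_mu_le_bound_D => //; [lra | nra | nra].
Qed.

Theorem theorem3 (P L : finType) (inc : P -> L -> bool) (q mu : nat) :
  is_projective_plane inc -> has_order inc q -> (2 <= mu)%N ->
  let s := INR (s_mu inc mu) in
  ((mu = 2%N -> (97 <= q)%N -> (s <= bound_D q (24 / 10))%R) /\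
   (mu = 3%N -> (181 <= q)%N -> (s <= bound_D q (26 / 10))%R) /\
   (mu = 4%N -> (125 <= q)%N -> (s <= bound_D q (28 / 10))%R) /\
   ((INR mu <= sqrt (INR q))%R -> (4 <= q)%N -> (s <= bound_D q (INR mu + 1))%R) /\
   ((INR mu <= 1 / 2 * ((1 - delta_q q) * INR q - delta_q q + 1) + 1)%R ->
      (3 <= q)%N -> (s <= bound_D q (2 * INR mu - 1))%R)).
Proof.
move=> plane ord mu2 s; rewrite {}/s.
have mu2R : (2 <= INR mu)%R by have := le_INR 2 mu (elimT leP mu2); rewrite /=; lra.
have reduce D m := @s_mu_le_bound_D_of_pow3 P L inc q mu m D plane ord mu2.
have muq_of_R : (INR mu <= INR q)%R -> (mu <= q)%N by move/INR_le/leP.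
split; [|split; [|split; [|split]]].
- move=> mu_eq q97; apply: (reduce _ 1); rewrite ?mu_eq /=; try lia; lra.
- move=> mu_eq q181; apply: (reduce _ 1); rewrite ?mu_eq /=; try lia; lra.
- move=> mu_eq q125; apply: (reduce _ 2); rewrite ?mu_eq /=; try lia; lra.
- move=> hmu q4.
  have q4R : (4 <= INR q)%R by have := le_INR 4 q (elimT leP q4); rewrite /=; lra.
  have sqrt_lt := sqrt_less _ (pos_INR q) ltac:(lra).
  apply: (reduce _ 1) => /=; [apply: muq_of_R; lra | lia | lia | lra | nra].
- move=> hmu q3.
  have delta0 : (0 <= delta_q q)%R.
    by rewrite /delta_q; apply/Rlt_le/Rdiv_lt_0_compat; [lra | have := ln_sqrt_lower q3; lra].
  have q3R : (3 <= INR q)%R by have := le_INR 3 q (elimT leP q3); rewrite /=; lra.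
  have dq := Rmult_le_pos _ _ delta0 (pos_INR q).
  apply: (reduce _ 1) => /=; [apply: muq_of_R; lra | lia | lia | lra | nra].
Qed.
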